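(* The pair $(\alpha_\infty,\varphi_\infty)=(0,\varphi_\infty)$ satisfies $d_{A_\infty}^*\alpha_\infty-2\pi^{\mathrm{skew}}\bigl(i*[\Phi_\infty^*\wedge\varphi_\infty]\bigr)=0$.
   Context: $X$ is a compact Riemann surface, $\Theta$ a square root of $K_X$, $E=\Theta\oplus\Theta^*$ with hermitian metric $H=k\oplus k^{-1}$ for a hermitian metric $k$ on $\Theta$. Let $q\in H^0(K_X^2)$ have only simple zeros, $X^\times=X\setminus q^{-1}(0)$, and $\dot q\in H^0(K_X^2)$. In a local holomorphic frame $dz^{\pm1/2}$ of $\Theta^{\pm1}$ with $H=\mathrm{diag}(\kappa,\kappa^{-1})$, $q=f\,dz^2$, $\dot q=\dot f\,dz^2$, define on $X^\times$ \[ \Phi_\infty=\begin{pmatrix}0&|f|^{-1/2}\kappa^{-1}f\\|f|^{1/2}\kappa&0\end{pmatrix}dz,\qquad \varphi_\infty=\begin{pmatrix}0&\tfrac12|f|^{-1/2}\kappa^{-1}\dot f\\\tfrac12|f|^{1/2}\kappa\,\dot f/f&0\end{pmatrix}dz \] (globally, $\Phi_\infty=\begin{pmatrix}0&|q|_k^{-1/2}q\\|q|_k^{1/2}&0\end{pmatrix}$ and $\varphi_\infty=\begin{pmatrix}0&\frac12|q|_k^{-1/2}\dot q\\\frac12|q|_k^{1/2}\dot q/q&0\end{pmatrix}$, $|q|_k$ the norm of $q$ induced by $k$). $A_\infty$ is the flat unitary connection of the limiting configuration $(A_\infty,\Phi_\infty)$ (the precise form is irrelevant here since $\alpha_\infty=0$).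 $\Phi_\infty^*$ is the $H$-adjoint, $*$ the Hodge star of a conformal metric on $X$, and $\pi^{\mathrm{skew}}:\mathfrak{sl}(E)\to\mathfrak{su}(E)$ the orthogonal projection onto $H$-skew-hermitian endomorphisms. *)

(* Pointwise (local-frame) formalization over an arbitrary
   numeric closed field C (e.g. complex numbers). *)
From HB Require Import structures.
From mathcomp Require Import all_boot all_order all_algebra.
Set Implicit Arguments. Unset Strict Implicit. Unset Printing Implicit Defensive.
Import Order.TTheory GRing.Theory Num.Theory.
Local Open Scope ring_scope.

Section Defs.
Variable C : numClosedFieldType.

(* 2x2 matrix [[a, b], [c, d]] in the frame (dz^{1/2}, dz^{-1/2}) *)
Definition mx2 (a b c d : C) : 'M[C]_2 :=
  \matrix_(i < 2, j < 2)
    (if (i == 0%N :> nat) then (if (j == 0%N :> nat) then a else b)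
     else (if (j == 0%N :> nat) then c else d)).

Definition Hmx (kappa : C) : 'M[C]_2 := mx2 kappa 0 0 kappa^-1.

Definition hadj (kappa : C) (M : 'M[C]_2) : 'M[C]_2 :=
  Hmx kappa^-1 *m (map_mx Num.conj M)^T *m Hmx kappa.

Definition pi_skew (kappa : C) (M : 'M[C]_2) : 'M[C]_2 :=
  2^-1 *: (M - hadj kappa M).

(* End(E)-valued 1-form  a dz + b dzbar, stored as the pair (a, b) *)
Definition form1 := ('M[C]_2 * 'M[C]_2)%type.

(* H-adjoint of a 1-form: (a dz + b dzbar)^* = b^* dz + a^* dzbar *)
Definition form_adj (kappa : C) (X : form1) : form1 :=
  (hadj kappa X.2, hadj kappa X.1).

(* [X /\ Y] = X /\ Y + Y /\ X for End(E)-valued 1-forms; the result is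
   returned as the coefficient c of the 2-form c dz /\ dzbar. *)
Definition wedge_br (X Y : form1) : 'M[C]_2 :=
  (X.1 *m Y.2 - X.2 *m Y.1) + (Y.1 *m X.2 - Y.2 *m X.1).

(* Hodge star of the 2-form c dz /\ dzbar for the conformal metric
   lambda (dx^2 + dy^2): dz /\ dzbar = -2i dx/\dy and *(dx/\dy) = 1/lambda. *)
Definition hodge2 (lambda : C) (c : 'M[C]_2) : 'M[C]_2 :=
  (- (2%:R * 'i) / lambda) *: c.

(* Phi_infinity and varphi_infinity in the local frame, with q = f dz^2,
   qdot = fd dz^2, H = diag(kappa, kappa^-1) *)
Definition Phi_inf (kappa f : C) : form1 :=
  (mx2 0 ((sqrtC `|f|)^-1 * kappa^-1 * f) (sqrtC `|f| * kappa) 0, 0).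

Definition phi_inf (kappa f fd : C) : form1 :=
  (mx2 0 (2^-1 * (sqrtC `|f|)^-1 * kappa^-1 * fd)
         (2^-1 * sqrtC `|f| * kappa * (fd / f)) 0, 0).

End Defs.

(* As alpha_inf = 0, everything reduces to [Phi_inf^* /\ phi_inf] = 0.  Since
   phi_inf = (qdot / 2q) Phi_inf, this bracket is a multiple of the commutator
   of the (1,0)-coefficient of Phi_inf with its H-adjoint, and that coefficient
   is H-normal: its two off-diagonal entries have the same H-norm, |q|_k^(1/2). *)
From HB Require Import structures.
From mathcomp Require Import all_boot all_order all_algebra ring.
Import Order.TTheory GRing.Theory Num.Theory.
Local Open Scope ring_scope.

Section Mx2.
Variable C : numClosedFieldType.
Implicit Types (a b c d e kappa : C).

Lemma mx2_mul a b c d a' b' c' d' :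
  mx2 a b c d *m mx2 a' b' c' d' =
  mx2 (a * a' + b * c') (a * b' + b * d') (c * a' + d * c') (c * b' + d * d').
Proof.
apply/matrixP => i j; rewrite !mxE !big_ord_recr big_ord0 /= !mxE /= add0r.
by case: i => [[|[|i]] ?] //; case: j => [[|[|j]] ?].
Qed.

Lemma mx2_conjT a b c d :
  (map_mx Num.conj (mx2 a b c d))^T = mx2 a^* c^* b^* d^*.
Proof.
by apply/matrixP => i j; rewrite !mxE; case: i => [[|[|i]] ?] //; case: j => [[|[|j]] ?].
Qed.

Lemma scale_mx2 a b c d e : e *: mx2 a b c d = mx2 (e * a) (e * b) (e * c) (e * d).
Proof.
by apply/matrixP => i j; rewrite !mxE; case: i => [[|[|i]] ?] //; case: j => [[|[|j]] ?].
Qed.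

Lemma hadj_mx2 kappa a b c d : kappa != 0 ->
  hadj kappa (mx2 a b c d) = mx2 a^* (c^* / kappa ^+ 2) (kappa ^+ 2 * b^*) d^*.
Proof.
move=> kappa_neq0; rewrite /hadj /Hmx invrK mx2_conjT !mx2_mul.
by congr mx2; field.
Qed.

Lemma hadj0 kappa : hadj kappa 0 = 0.
Proof. by rewrite /hadj map_mx0 trmx0 mulmx0 mul0mx. Qed.

Lemma pi_skew0 kappa : pi_skew kappa 0 = 0.
Proof. by rewrite /pi_skew hadj0 subrr scaler0. Qed.

End Mx2.

Section Forms.
Variable C : numClosedFieldType.
Implicit Types (kappa : C) (A X Y : 'M[C]_2).

Lemma form_adj_dz kappa A : form_adj kappa (A, 0) = (0, hadj kappa A).
Proof. by rewrite /form_adj hadj0. Qed.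

Lemma wedge_br_dzbar_dz X Y : wedge_br (0, X) (Y, 0) = Y *m X - X *m Y.
Proof. by rewrite /wedge_br /= !(mulmx0, mul0mx) !subr0 sub0r addrC. Qed.

Lemma wedge_br_adj_scale_normal kappa A e :
  A *m hadj kappa A = hadj kappa A *m A ->
  wedge_br (form_adj kappa (A, 0)) (e *: A, 0) = 0.
Proof.
move=> normA; rewrite form_adj_dz wedge_br_dzbar_dz.
by rewrite -scalemxAl -scalemxAr normA subrr.
Qed.

End Forms.

Section LimitingConfiguration.
Variables (C : numClosedFieldType) (kappa f : C).
Hypotheses (kappa_real : kappa \is Num.real) (kappa_neq0 : kappa != 0).

Lemma Phi_inf_normal :
  let A := (Phi_inf kappa f).1 in A *m hadj kappa A = hadj kappa A *m A.
Proof.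
rewrite /= hadj_mx2 // !mx2_mul.
set s := sqrtC `|f|.
have [s0|s_neq0] := eqVneq s 0.
  by rewrite s0 !(invr0, rmorph0, mul0r, mulr0, addr0).
have f_neq0 : f != 0.
  by apply: contra_neq s_neq0 => f0; rewrite /s f0 normr0 sqrtC0.
have norm_f2 : s ^+ 4 = f * f^* by rewrite -normCK -(sqrtCK `|f|) -exprM.
have conj_f : f^* = s ^+ 4 / f by rewrite norm_f2 mulrC mulKf.
have s_real : s \is Num.real by rewrite sqrtC_real.
rewrite !(rmorph0, rmorphM, fmorphV) /= !(conj_Creal s_real, conj_Creal kappa_real).
by rewrite conj_f; congr mx2; field; rewrite ?s_neq0 ?kappa_neq0 ?f_neq0.
Qed.

Lemma phi_inf_scale fd : f != 0 ->
  phi_inf kappa f fd = ((fd / (2 * f)) *: (Phi_inf kappa f).1, 0).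
Proof.
move=> f_neq0; rewrite /phi_inf /= scale_mx2.
by congr (mx2 _ _ _ _, _); field; rewrite ?sqrtC_eq0 ?normr_eq0 ?kappa_neq0 f_neq0.
Qed.

Lemma wedge_br_Phi_phi_inf fd : f != 0 ->
  wedge_br (form_adj kappa (Phi_inf kappa f)) (phi_inf kappa f fd) = 0.
Proof.
move=> f_neq0; rewrite phi_inf_scale //.
exact: wedge_br_adj_scale_normal Phi_inf_normal.
Qed.

End LimitingConfiguration.

Theorem lemma3p11 (C : numClosedFieldType) (kappa lambda f fd : C) :
  0 < kappa -> 0 < lambda -> f != 0 ->
  (0 : 'M[C]_2)
    - 2%:R *: pi_skew kappa
        ('i *: hodge2 lambda
           (wedge_br (form_adj kappa (Phi_inf kappa f)) (phi_inf kappa f fd)))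
  = 0.
Proof.
move=> kappa_gt0 _ f_neq0.
rewrite (wedge_br_Phi_phi_inf _ _ _ (gtr0_real kappa_gt0) (lt0r_neq0 kappa_gt0) fd f_neq0).
by rewrite /hodge2 !scaler0 pi_skew0 scaler0 subrr.
Qed.
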